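(* Let $M=(C,A,B)$ with $C\in\mathbb{R}^{p\times n}$, $A\in\mathbb{R}^{n\times n}$, $B\in\mathbb{R}^{n\times m}$ and $\rho(A)<1$, and fix an integer $d>0$. Then $$\|\mathcal{H}_{d,\infty,\infty}\|_2\le\|\mathcal{H}_{0,\infty,\infty}-\bar{\mathcal{H}}_{0,d,d}\|_2\le\sqrt2\,\|\mathcal{H}_{d,\infty,\infty}\|_2\le\sqrt2\,\|\mathcal{T}_{d,\infty}\|_2 .$$
   Context: $\mathcal{H}_{k,a,b}$ is the block Hankel matrix whose $(i,j)$ block ($1\le i\le a$, $1\le j\le b$, with $a=b=\infty$ allowed) is $CA^{k+i+j-2}B$. $\mathcal{T}_{k,\infty}$ is the infinite block lower-triangular Toeplitz matrix with zero diagonal blocks and $(i,j)$ block $CA^{k+i-j-1}B$ for $i>j$. For a finite matrix $P$, $\bar P=\begin{bmatrix}P&0\\0&0\end{bmatrix}$ is its zero padding to a doubly infinite matrix. Norms of infinite matrices are operator norms on $\ell^2$. *)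

From HB Require Import structures.
From mathcomp Require Import all_boot all_order all_algebra.
From mathcomp Require Import complex.
From mathcomp Require Import all_classical all_reals.
From mathcomp Require Import ereal.
Set Implicit Arguments. Unset Strict Implicit. Unset Printing Implicit Defensive.
Import Order.TTheory GRing.Theory Num.Theory.
Local Open Scope ring_scope.
Local Open Scope classical_set_scope.

(* An infinite block matrix with p x m blocks, indexed by block row i and
   block column j (0-based). *)
Definition blockmx (R : realType) (p m : nat) := nat -> nat -> 'M[R]_(p, m).

Definition sqnorm (R : realType) (k : nat) (v : 'cV[R]_k) : R :=
  \sum_(a < k) v a 0 ^+ 2.

(* A finitely supported block vector is given by the list of its first blocks. *)
Definition bapply (R : realType) (p m : nat) (F : blockmx R p m)
  (x : seq 'cV[R]_m) : nat -> 'cV[R]_p :=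
  fun i => \sum_(j < size x) F i j *m x`_j.

Definition l2norm (R : realType) (p : nat) (y : nat -> 'cV[R]_p) : \bar R :=
  ereal_sup (range (fun N : nat => (Num.sqrt (\sum_(i < N) sqnorm (y i)))%:E)).

(* Operator norm on l^2 (supremum over the dense subspace of finitely
   supported vectors of norm <= 1). *)
Definition opnorm (R : realType) (p m : nat) (F : blockmx R p m) : \bar R :=
  ereal_sup [set l2norm (bapply F x) | x in
    [set x : seq 'cV[R]_m | \sum_(j < size x) sqnorm x`_j <= 1]].

Definition hankel (R : realType) (p n m : nat) (C : 'M[R]_(p, n))
  (A : 'M[R]_n) (B : 'M[R]_(n, m)) (k : nat) : blockmx R p m :=
  fun i j => C *m (A ^+ (k + i + j)) *m B.

(* zero padding of the finite H_{k,a,b} *)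
Definition hankel_pad (R : realType) (p n m : nat) (C : 'M[R]_(p, n))
  (A : 'M[R]_n) (B : 'M[R]_(n, m)) (k a b : nat) : blockmx R p m :=
  fun i j => if (i < a)%N && (j < b)%N then C *m (A ^+ (k + i + j)) *m B else 0.

Definition toeplitz (R : realType) (p n m : nat) (C : 'M[R]_(p, n))
  (A : 'M[R]_n) (B : 'M[R]_(n, m)) (k : nat) : blockmx R p m :=
  fun i j => if (j < i)%N then C *m (A ^+ (k + i - j - 1)) *m B else 0.

Definition bsub (R : realType) (p m : nat) (F G : blockmx R p m) : blockmx R p m :=
  fun i j => F i j - G i j.

Definition spec_rad_lt1 (R : realType) (n : nat) (A : 'M[R]_n) : Prop :=
  forall l : R[i], eigenvalue (map_mx (fun x : R => (x%:C)%C) A) l -> `|l| < 1.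

From HB Require Import structures.
From mathcomp Require Import all_boot all_order all_algebra.
From mathcomp Require Import complex.
From mathcomp Require Import all_classical all_reals.
From mathcomp Require Import ereal.
From mathcomp Require Import zify.
Import Order.TTheory GRing.Theory Num.Theory.
Local Open Scope ring_scope.
Local Open Scope ereal_scope.
Set Implicit Arguments.
Unset Strict Implicit.

(* All three bounds compare block rows.  Row i of H_d applied to x is row
   d + i of G := H_0 - pad(H_{0,d,d}), and row size(x) + i of T_d applied to
   the reversal of x; so H_d is, up to a reordering of the input, a
   submatrix of G and of T_d.  Conversely the first d rows of G are rows of
   H_d applied to x with its first d blocks dropped, and its remaining rows
   are exactly H_d x, so |G x|^2 <= 2 |H_d|^2 |x|^2. *)

Section BlockOperatorNorm.
Variable R : realType.
Local Open Scope ring_scope.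

Definition seq_sqnorm m (x : seq 'cV[R]_m) : R := \sum_(j < size x) sqnorm x`_j.

Lemma sqnorm_ge0 k (v : 'cV[R]_k) : 0 <= sqnorm v.
Proof. by apply: sumr_ge0 => a _; apply: sqr_ge0. Qed.

Lemma sum_prefix_le (f : nat -> R) N k : (forall i, 0 <= f i) ->
  \sum_(i < N) f i <= \sum_(i < N + k) f i.
Proof. by move=> f0; rewrite big_split_ord lerDl sumr_ge0. Qed.

Lemma sum_suffix_le (f : nat -> R) k N : (forall i, 0 <= f i) ->
  \sum_(i < N) f (k + i)%N <= \sum_(i < k + N) f i.
Proof. by move=> f0; rewrite big_split_ord lerDr sumr_ge0. Qed.

Lemma seq_sqnorm_rev m (x : seq 'cV[R]_m) : seq_sqnorm (rev x) = seq_sqnorm x.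
Proof.
rewrite /seq_sqnorm size_rev (reindex_inj rev_ord_inj) /=.
apply: eq_bigr => j _; have lt_j_x := ltn_ord j.
by rewrite nth_rev; [congr (sqnorm x`_ _) | ]; lia.
Qed.

Lemma seq_sqnorm_drop m k (x : seq 'cV[R]_m) : seq_sqnorm (drop k x) <= seq_sqnorm x.
Proof.
rewrite /seq_sqnorm size_drop; under eq_bigr do rewrite nth_drop.
have [le_k_x | lt_x_k] := leqP k (size x).
  move: (subnKC le_k_x) => /esym; move: (size x - k)%N => K ->.
  by apply: (@sum_suffix_le (fun j => sqnorm x`_j)) => j; apply: sqnorm_ge0.
by rewrite (_ : size x - k = 0)%N ?big_ord0 ?sumr_ge0 // => [j _|]; [apply: sqnorm_ge0 | lia].
Qed.

Lemma bapply_drop p m (F : blockmx R p m) k x i :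
  (forall j, (j < k)%N -> F i j = 0) ->
  bapply F x i = bapply (fun i' j => F i' (k + j)%N) (drop k x) i.
Proof.
move=> F0; rewrite /bapply size_drop.
have [le_k_x | lt_x_k] := leqP k (size x).
  move: (subnKC le_k_x) => /esym; move: (size x - k)%N => K ->.
  rewrite big_split_ord /= big1 ?add0r => [|j _]; last by rewrite F0 ?mul0mx.
  by apply: eq_bigr => j _; rewrite nth_drop.
rewrite (_ : size x - k = 0)%N ?big_ord0; last by lia.
by rewrite big1 // => j _; rewrite F0 ?mul0mx //; apply: ltn_trans lt_x_k.
Qed.

Lemma l2norm_ge p (y : nat -> 'cV[R]_p) N :
  ((Num.sqrt (\sum_(i < N) sqnorm (y i)))%:E <= l2norm y)%E.
Proof. by apply: ereal_sup_ubound; exists N. Qed.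

Lemma l2norm_le p q (y : nat -> 'cV[R]_p) (z : nat -> 'cV[R]_q) :
  (forall N, exists M, \sum_(i < N) sqnorm (y i) <= \sum_(i < M) sqnorm (z i)) ->
  (l2norm y <= l2norm z)%E.
Proof.
move=> yz; apply: ub_ereal_sup => _ [N _ <-]; have [M le_yz] := yz N.
by apply: le_trans (l2norm_ge z M); rewrite lee_fin ler_wsqrtr.
Qed.

Lemma opnorm_ge p m (F : blockmx R p m) x :
  seq_sqnorm x <= 1 -> (l2norm (bapply F x) <= opnorm F)%E.
Proof. by move=> x1; apply: ereal_sup_ubound; exists x. Qed.

Lemma opnorm_ge0 p m (F : blockmx R p m) : (0 <= opnorm F)%E.
Proof.
apply: le_trans (opnorm_ge F (x := [::]) _); last by rewrite /seq_sqnorm big_ord0.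
by apply: le_trans (l2norm_ge _ 0); rewrite big_ord0 sqrtr0.
Qed.

Lemma opnorm_leP p m (F : blockmx R p m) r : 0 <= r ->
  reflect (forall x N, seq_sqnorm x <= 1 ->
             \sum_(i < N) sqnorm (bapply F x i) <= r ^+ 2)
          (opnorm F <= r%:E)%E.
Proof.
move=> r0; have sqrt_le S : 0 <= S -> (Num.sqrt S <= r) = (S <= r ^+ 2).
  by move=> S0; rewrite -{1}(ger0_norm r0) -sqrtr_sqr ler_sqrt // exprn_ge0.
apply: (iffP idP) => [le_Fr x N x1 | bound].
  rewrite -sqrt_le ?sumr_ge0 // => [|i _]; last exact: sqnorm_ge0.
  by rewrite -lee_fin (le_trans (l2norm_ge _ N)) // (le_trans (opnorm_ge F x1)).
apply: ub_ereal_sup => _ [x x1 <-]; apply: ub_ereal_sup => _ [N _ <-].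
by rewrite lee_fin sqrt_le ?bound ?sumr_ge0 // => i _; apply: sqnorm_ge0.
Qed.

Lemma opnorm_le_shifted p m (F G : blockmx R p m) (f : seq 'cV_m -> seq 'cV_m)
    (shift : seq 'cV_m -> nat) :
  (forall x, seq_sqnorm (f x) <= seq_sqnorm x) ->
  (forall x i, bapply F x i = bapply G (f x) (shift x + i)%N) ->
  (opnorm F <= opnorm G)%E.
Proof.
move=> f_le FG; apply: ub_ereal_sup => _ [x x1 <-].
apply: le_trans (opnorm_ge G (le_trans (f_le x) x1)).
apply: l2norm_le => N; exists (shift x + N)%N; under eq_bigr do rewrite FG.
by apply: (@sum_suffix_le (fun i => sqnorm (bapply G (f x) i))) => i; apply: sqnorm_ge0.
Qed.

Lemma opnorm_stack_le p m (F G : blockmx R p m) (f : seq 'cV_m -> seq 'cV_m) k :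
  (forall x, seq_sqnorm (f x) <= seq_sqnorm x) ->
  (forall x i, (i < k)%N -> bapply G x i = bapply F (f x) i) ->
  (forall x i, bapply G x (k + i)%N = bapply F x i) ->
  (opnorm G <= (Num.sqrt 2)%:E * opnorm F)%E.
Proof.
move=> f_le G_head G_tail; have := opnorm_ge0 F.
case: (opnorm F) (@opnorm_leP _ _ F) => [r /(_ r) F_le | _ _|//]; last first.
  by rewrite gt0_muley ?leey // lte_fin sqrtr_gt0.
rewrite lee_fin => r0; have {}F_le := elimTF (F_le r0) (lexx _).
apply/opnorm_leP; first by rewrite mulr_ge0 ?sqrtr_ge0.
move=> x N x1; rewrite exprMn sqr_sqrtr // mulr2n mulrDl mul1r.
apply: le_trans (@sum_prefix_le (fun i => sqnorm (bapply G x i)) N k _) _.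
  by move=> i; apply: sqnorm_ge0.
rewrite addnC big_split_ord /=; apply: lerD.
  under eq_bigr => i _ do rewrite (G_head x i (ltn_ord i)).
  by apply: F_le; apply: le_trans x1.
by under eq_bigr do rewrite G_tail; apply: F_le.
Qed.

End BlockOperatorNorm.

Section HankelBlocks.
Variables (R : realType) (p n m : nat).
Variables (C : 'M[R]_(p, n)) (A : 'M[R]_n) (B : 'M[R]_(n, m)) (d : nat).
Local Open Scope ring_scope.

Let G := bsub (hankel C A B 0) (hankel_pad C A B 0 d d).

Lemma bapply_hankel_tail x i : bapply G x (d + i)%N = bapply (hankel C A B d) x i.
Proof.
apply: eq_bigr => j _.
by rewrite /G /bsub /hankel /hankel_pad ltnNge leq_addr /= subr0 add0n.
Qed.

Lemma bapply_hankel_head x i : (i < d)%N ->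
  bapply G x i = bapply (hankel C A B d) (drop d x) i.
Proof.
move=> lt_i_d; rewrite (bapply_drop (k := d)) => [|j lt_j_d]; last first.
  by rewrite /G /bsub /hankel_pad lt_i_d lt_j_d subrr.
apply: eq_bigr => j _; rewrite /G /bsub /hankel /hankel_pad lt_i_d /=.
by rewrite ltnNge leq_addr /= subr0 add0n addnCA addnA.
Qed.

Lemma bapply_hankel_toeplitz x i :
  bapply (hankel C A B d) x i = bapply (toeplitz C A B d) (rev x) (size x + i)%N.
Proof.
rewrite /bapply size_rev (reindex_inj rev_ord_inj) /=.
apply: eq_bigr => j _; have lt_j_x := ltn_ord j.
rewrite /toeplitz /hankel nth_rev // (_ : j < size x + i)%N; last by lia.
by congr (C *m A ^+ _ *m B *m _); lia.
Qed.

End HankelBlocks.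

Unset Implicit Arguments.
Set Strict Implicit.

(* The bounds hold in the extended reals for every A and d. *)
Theorem proposition13 (R : realType) (p n m : nat)
  (C : 'M[R]_(p, n)) (A : 'M[R]_n) (B : 'M[R]_(n, m)) (d : nat) :
  spec_rad_lt1 A -> (0 < d)%N ->
  opnorm (hankel C A B d)
    <= opnorm (bsub (hankel C A B 0) (hankel_pad C A B 0 d d)) /\
  opnorm (bsub (hankel C A B 0) (hankel_pad C A B 0 d d))
    <= (Num.sqrt (2 : R))%:E * opnorm (hankel C A B d) /\
  (Num.sqrt (2 : R))%:E * opnorm (hankel C A B d)
    <= (Num.sqrt (2 : R))%:E * opnorm (toeplitz C A B d).
Proof.
move=> _ _; split; [|split].
- apply: (opnorm_le_shifted (f := id) (shift := fun=> d)) => // x i.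
  by rewrite bapply_hankel_tail.
- apply: (opnorm_stack_le (f := drop d) (k := d)).
  + exact: seq_sqnorm_drop.
  + exact: bapply_hankel_head.
  + exact: bapply_hankel_tail.
- rewrite lee_wpmul2l ?lee_fin ?sqrtr_ge0 //.
  apply: (opnorm_le_shifted (f := rev) (shift := size)).
  + by move=> x; rewrite seq_sqnorm_rev.
  + exact: bapply_hankel_toeplitz.
Qed.
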